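(* Let $p\in[1,\infty)$. Then for every $f\in\bigcup_{s\in(0,\infty)}{\rm B}^\kappa_{s,p}(\mathbb{R}^n)$, $$\lim_{s\to0^+}s\int_0^1t^{-(1+\frac{ps}{2})}\int_{\mathbb{R}^n}P_t^\kappa(|f-f(x)|^p)(x)\,\mu_\kappa(dx)\,dt=0.$$
   Context: Dunkl setting on $\mathbb{R}^n$: root system $\mathcal{R}$ with reflections $r_\alpha$, positive subsystem $\mathcal{R}_+$, multiplicity $\kappa:\mathcal{R}\to[0,\infty)$ invariant under the reflection group. $\mu_\kappa=w_\kappa dx$ with $w_\kappa(x)=\prod_{\alpha\in\mathcal{R}_+}|\langle\alpha,x\rangle|^{2\kappa(\alpha)}$; $(P_t^\kappa)$ is the Dunkl heat semigroup generated by the Dunkl Laplacian $\Delta_\kappa f=\Delta f+2\sum_{\alpha\in\mathcal{R}_+}\kappa(\alpha)\big(\frac{\langle\alpha,\nabla f(x)\rangle}{\langle\alpha,x\rangle}-\frac{f(x)-f(r_\alpha x)}{\langle\alpha,x\rangle^2}\big)$, with heat kernel $p_t^\kappa$; $P_t^\kappa(|f-f(x)|^p)(x)=\int|f(y)-f(x)|^pp_t^\kappa(x,y)\mu_\kappa(dy)$. For $p\in[1,\infty)$, $s>0$: ${\rm N}^\kappa_{s,p}(f)=\big(\int_0^\infty t^{-(1+\frac{sp}{2})}\int P_t^\kappa(|f-f(x)|^p)(x)\mu_\kappa(dx)dt\big)^{1/p}$ and ${\rm B}^\kappa_{s,p}(\mathbb{R}^n)=\{f\in{\rm L}^p(\mu_\kappa):{\rm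 N}^\kappa_{s,p}(f)<\infty\}$. *)

(* Dunkl setting on R^n, with R^n = n.-tuple R
   (equipped with mathcomp-analysis' product (= Borel) sigma-algebra).    *)
From HB Require Import structures.
From mathcomp Require Import all_boot all_order all_algebra.
From mathcomp Require Import all_classical all_reals all_analysis.
Set Implicit Arguments. Unset Strict Implicit. Unset Printing Implicit Defensive.
Import Order.TTheory GRing.Theory Num.Theory.
Import numFieldNormedType.Exports.
Local Open Scope ring_scope.
Local Open Scope classical_set_scope.

Section Dunkl.
Variable R : realType.

Definition vadd n (x y : n.-tuple R) : n.-tuple R := [tuple tnth x i + tnth y i | i < n].
Definition vsub n (x y : n.-tuple R) : n.-tuple R := [tuple tnth x i - tnth y i | i < n].
Definition vscale n (c : R) (x : n.-tuple R) : n.-tuple R := [tuple c * tnth x i | i < n].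
Definition vzero n : n.-tuple R := [tuple (0 : R) | i < n].
Definition dot n (x y : n.-tuple R) : R := \sum_(i < n) tnth x i * tnth y i.
Definition sqnorm n (x : n.-tuple R) : R := dot x x.

Definition refl n (a x : n.-tuple R) : n.-tuple R :=
  vsub x (vscale (2 * dot a x / dot a a) a).

(* ---------- Lebesgue integral on R^n ----------
   Defined as the iterated one-dimensional Lebesgue integral; for the
   nonnegative measurable integrands used below this is the Lebesgue
   integral on R^n (Tonelli). *)
Fixpoint intRn (n : nat) : (n.-tuple R -> \bar R) -> \bar R :=
  match n return (n.-tuple R -> \bar R) -> \bar R with
  | 0 => fun g => g [tuple]
  | m.+1 => fun g =>
      (\int[@lebesgue_measure R]_(x0 in [set: R]) intRn (fun v => g (cons_tuple x0 v)))%E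
  end.

(* ---------- root system data ----------
   Rs : the (finite, duplicate-free) root system R, listed as a sequence;
   beta : a vector with <a,beta> <> 0 for every root; the positive
   subsystem is R_+ = {a in R | <a,beta> > 0};  kappa : multiplicity. *)
Definition is_root_system n (Rs : seq (n.-tuple R)) : Prop :=
  [/\ uniq Rs,
      (forall a, a \in Rs -> dot a a = 2),
      (forall a b, a \in Rs -> b \in Rs -> refl a b \in Rs) &
      (forall a (c : R), a \in Rs -> vscale c a \in Rs -> c = 1 \/ c = -1)].

Definition is_positive_direction n (Rs : seq (n.-tuple R)) (beta : n.-tuple R) : Prop :=
  forall a, a \in Rs -> dot a beta != 0.

(* kappa : R -> [0,oo), invariant under the reflection group (generated by
   the r_b, b in R). *)
Definition is_multiplicity n (Rs : seq (n.-tuple R)) (kappa : n.-tuple R -> R) : Prop :=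
  (forall a, a \in Rs -> 0 <= kappa a) /\
  (forall a b, a \in Rs -> b \in Rs -> kappa (refl b a) = kappa a).

Definition wk n (Rs : seq (n.-tuple R)) beta kappa (x : n.-tuple R) : R :=
  \prod_(a <- Rs | 0 < dot a beta) (`|dot a x| `^ (2 * kappa a)).

Definition gammak n (Rs : seq (n.-tuple R)) beta kappa : R :=
  \sum_(a <- Rs | 0 < dot a beta) kappa a.

Definition has_dirderiv n (g : n.-tuple R -> R) (x xi : n.-tuple R) (d : R) : Prop :=
  (fun h : R => h^-1 * (g (vadd x (vscale h xi)) - g x)) @ (0:R)^' --> (d : R).

Definition continuous_on_Rn n (g : n.-tuple R -> R) : Prop :=
  forall x (e : R), 0 < e -> exists2 del : R, 0 < del &
    forall z, sqnorm (vsub z x) < del -> `|g z - g x| < e.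

(* E is the (real) Dunkl kernel: for every y, x |-> E x y is continuous,
   E(0,y) = 1, and T_xi E(.,y) = <xi,y> E(.,y) (Dunkl operators
   T_xi g(x) = d_xi g(x) + sum_{a in R_+} kappa(a) <a,xi> (g(x)-g(r_a x))/<a,x>)
   off the reflecting hyperplanes.  E > 0 is a known property (Roesler). *)
Definition is_dunkl_kernel n (Rs : seq (n.-tuple R)) beta kappa
    (E : n.-tuple R -> n.-tuple R -> R) : Prop :=
  [/\ forall x y, 0 < E x y,
      forall y, continuous_on_Rn (fun x => E x y),
      forall y, E (vzero n) y = 1 &
      forall y x xi, (forall a, a \in Rs -> dot a x != 0) ->
        has_dirderiv (fun z => E z y) x xi
          (dot xi y * E x y
           - \sum_(a <- Rs | 0 < dot a beta)
               kappa a * dot a xi * (E x y - E (refl a x) y) / dot a x)].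

Definition dunkl_kernel n (Rs : seq (n.-tuple R)) beta kappa : n.-tuple R -> n.-tuple R -> R :=
  match pselect (exists E, is_dunkl_kernel Rs beta kappa E) with
  | left h => proj1_sig (cid h)
  | right _ => fun _ _ => 1
  end.

Definition ck n (Rs : seq (n.-tuple R)) beta kappa : R :=
  fine (intRn (fun x : n.-tuple R => (expR (- sqnorm x / 2) * wk Rs beta kappa x)%:E)).

Definition heat_kernel n (Rs : seq (n.-tuple R)) beta kappa (t : R) (x y : n.-tuple R) : R :=
  let g := gammak Rs beta kappa + n%:R / 2 in
  (2 `^ g * ck Rs beta kappa)^-1 * t `^ (- g)
  * expR (- (sqnorm x + sqnorm y) / (4 * t))
  * dunkl_kernel Rs beta kappa (vscale (Num.sqrt (2 * t))^-1 x)
                               (vscale (Num.sqrt (2 * t))^-1 y).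

(* P_t^kappa(|f - f(x)|^p)(x) = int |f(y)-f(x)|^p p_t(x,y) mu_kappa(dy) *)
Definition Pt_diff n Rs beta kappa (p t : R) (f : n.-tuple R -> R) (x : n.-tuple R) : \bar R :=
  intRn (fun y => (`|f y - f x| `^ p * heat_kernel Rs beta kappa t x y
                   * wk Rs beta kappa y)%:E).

Definition Pt_energy n Rs beta kappa (p t : R) (f : n.-tuple R -> R) : \bar R :=
  intRn (fun x => (Pt_diff Rs beta kappa p t f x * (wk Rs beta kappa x)%:E)%E).

Definition Nk_pow n Rs beta kappa (s p : R) (f : n.-tuple R -> R) : \bar R :=
  (\int[@lebesgue_measure R]_(t in `]0%R, +oo[)
     ((t `^ (- (1 + s * p / 2)))%:E * Pt_energy Rs beta kappa p t f))%E.

Definition in_Besov n Rs beta kappa (s p : R) (f : n.-tuple R -> R) : Prop :=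
  [/\ measurable_fun [set: n.-tuple R] f,
      (intRn (fun x => (`|f x| `^ p * wk Rs beta kappa x)%:E) < +oo)%E &
      (Nk_pow Rs beta kappa s p f < +oo)%E].

End Dunkl.

From HB Require Import structures.
From mathcomp Require Import all_boot all_order all_algebra.
From mathcomp Require Import all_classical all_reals all_analysis.
Import Order.TTheory GRing.Theory Num.Theory.
Import numFieldNormedType.Exports.
Local Open Scope ring_scope.
Local Open Scope classical_set_scope.

(* For t in (0, 1] the weight t^-(1 + p s / 2) increases with s, so for
   0 < s <= s0 the truncated integral is dominated by N_{s0,p}(f)^p < oo.
   The quantity in the limit is thus at most s N_{s0,p}(f)^p, which tends
   to 0 with s. *)

Section integral_monotonicity.
Local Open Scope ereal_scope.
Context d (T : measurableType d) (R : realType).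
Variable mu : {measure set T -> \bar R}.

(* No measurability is needed: the integral of a nonnegative function is a
   supremum over the simple functions below it. *)
Lemma ge0_le_integral_subset (D1 D2 : set T) (f1 f2 : T -> \bar R) :
  D1 `<=` D2 -> (forall x, D2 x -> 0 <= f2 x) ->
  (forall x, D1 x -> 0 <= f1 x <= f2 x) ->
  \int[mu]_(x in D1) f1 x <= \int[mu]_(x in D2) f2 x.
Proof.
move=> D12 f2_ge0 f12.
have f1_ge0 x : D1 x -> 0 <= f1 x by move=> /f12 /andP[].
rewrite (integral_mkcond D1) (integral_mkcond D2).
rewrite !ge0_integralTE; [|exact: erestrict_ge0..].
apply: ereal_sup_le => _ [h h_le <-]; exists h => //= x.
apply: le_trans (h_le x) _; rewrite /patch; case: ifPn => [/[!inE] D1x|_].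
  by rewrite ifT ?inE; [case/andP: (f12 _ D1x)|exact: D12].
exact: erestrict_ge0.
Qed.

End integral_monotonicity.

Lemma intRn_ge0 (R : realType) n (g : n.-tuple R -> \bar R) :
  (forall x, 0 <= g x)%E -> (0 <= intRn g)%E.
Proof.
elim: n g => [|n IH] g g_ge0 /=; first exact: g_ge0.
by apply: integral_ge0 => x _; apply: IH => v; exact: g_ge0.
Qed.

Section dunkl_nonnegativity.
Variables (R : realType) (n : nat) (Rs : seq (n.-tuple R)).
Variables (beta : n.-tuple R) (kappa : n.-tuple R -> R).

Lemma wk_ge0 x : 0 <= wk Rs beta kappa x.
Proof. by apply: prodr_ge0 => *; exact: powR_ge0. Qed.

Lemma dunkl_kernel_ge0 x y : 0 <= dunkl_kernel Rs beta kappa x y.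
Proof.
rewrite /dunkl_kernel; case: pselect => [h|_] //.
by case: (cid h) => E [E_gt0 _ _ _] /=; exact/ltW.
Qed.

Lemma ck_ge0 : 0 <= ck Rs beta kappa.
Proof.
apply: fine_ge0; apply: intRn_ge0 => x.
by rewrite lee_fin mulr_ge0 ?expR_ge0 ?wk_ge0.
Qed.

Lemma heat_kernel_ge0 t x y : 0 <= heat_kernel Rs beta kappa t x y.
Proof.
rewrite /heat_kernel !mulr_ge0 ?powR_ge0 ?expR_ge0 ?dunkl_kernel_ge0 //.
by rewrite invr_ge0 mulr_ge0 ?powR_ge0 ?ck_ge0.
Qed.

Lemma Pt_energy_ge0 p t f : (0 <= Pt_energy Rs beta kappa p t f)%E.
Proof.
apply: intRn_ge0 => x; apply: mule_ge0; last by rewrite lee_fin wk_ge0.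
apply: intRn_ge0 => y.
rewrite lee_fin mulr_ge0 ?wk_ge0 //.
by rewrite mulr_ge0 ?heat_kernel_ge0 // powR_ge0.
Qed.

End dunkl_nonnegativity.

Section truncated_weighted_integral.
Local Open Scope ereal_scope.
Variable R : realType.

Lemma truncated_weighted_integral_ge0 (F : R -> \bar R) (a : R) :
  (forall t, 0 <= F t) ->
  0 <= \int[@lebesgue_measure R]_(t in `]0%R, 1%R]) ((t `^ (- a))%:E * F t).
Proof.
by move=> F_ge0; apply: integral_ge0 => t _; rewrite mule_ge0 ?lee_fin ?powR_ge0.
Qed.

Lemma truncated_weighted_integral_le (F : R -> \bar R) (a b : R) :
  (forall t, 0 <= F t) -> (a <= b)%R ->
  \int[@lebesgue_measure R]_(t in `]0%R, 1%R]) ((t `^ (- a))%:E * F t)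
  <= \int[@lebesgue_measure R]_(t in `]0%R, +oo[) ((t `^ (- b))%:E * F t).
Proof.
move=> F_ge0 ab; apply: ge0_le_integral_subset.
- by move=> t /=; rewrite !in_itv /= => /andP[-> _].
- by move=> t _; rewrite mule_ge0 ?lee_fin ?powR_ge0.
move=> t /=; rewrite in_itv /= => /andP[t_gt0 t_le1].
rewrite mule_ge0 ?lee_fin ?powR_ge0 //=.
by rewrite lee_wpmul2r // lee_fin ger_powR ?t_gt0 // lerN2.
Qed.

End truncated_weighted_integral.

Lemma cvg_mul_bounded_at_right0 (R : realType) (g : R -> \bar R) (C : \bar R) :
  C \is a fin_num -> (\forall s \near 0^'+, 0 <= g s <= C)%E ->
  (fun s => s%:E * g s)%E @ 0^'+ --> 0%E.
Proof.
move=> C_fin g_bnd.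
apply: (@squeeze_cvge _ _ _ _ (cst 0%E) _ (fun s => s%:E * C)%E).
- near=> s; have /andP[g_ge0 g_leC] : (0 <= g s <= C)%E by near: s.
  have s_ge0 : (0 <= s%:E)%E by rewrite lee_fin ltW //; near: s; exact: nbhs_right_gt.
  by rewrite mule_ge0 // lee_wpmul2l.
- exact: cvg_cst.
- rewrite -(mul0e C); apply: cvgeZr => //.
  by apply: cvg_EFin; [exact: nearW|exact: cvg_at_right_filter cvg_id].
Unshelve. all: end_near. Qed.

Theorem proposition3p1 (R : realType) (n : nat) (Rs : seq (n.-tuple R))
  (beta : n.-tuple R) (kappa : n.-tuple R -> R) (p : R)
  (f : n.-tuple R -> R) :
  is_root_system Rs ->
  is_positive_direction Rs beta ->
  is_multiplicity Rs kappa ->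
  1 <= p ->
  (exists2 s0 : R, 0 < s0 & in_Besov Rs beta kappa s0 p f) ->
  (fun s : R =>
     (s%:E * \int[@lebesgue_measure R]_(t in `]0%R, 1%R])
        ((t `^ (- (1 + p * s / 2)))%:E * Pt_energy Rs beta kappa p t f))%E)
    @ 0^'+ --> 0%E.
Proof.
move=> _ _ _ p_ge1 [s0 s0_gt0 [_ _ N_fin]].
have energy_ge0 t := @Pt_energy_ge0 R n Rs beta kappa p t f.
have N_ge0 : (0 <= Nk_pow Rs beta kappa s0 p f)%E.
  by apply: integral_ge0 => t _; rewrite mule_ge0 ?lee_fin ?powR_ge0.
apply: (@cvg_mul_bounded_at_right0 _ _ (Nk_pow Rs beta kappa s0 p f)).
  by rewrite ge0_fin_numE.
near=> s; apply/andP; split; first exact: truncated_weighted_integral_ge0.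
rewrite /Nk_pow; apply: truncated_weighted_integral_le => //.
have p_gt0 : 0 < p by exact: lt_le_trans p_ge1.
rewrite lerD2l ler_pM2r ?invr_gt0 ?ltr0n // [s0 * p]mulrC ler_pM2l //.
by apply/ltW; near: s; exact: nbhs_right_lt.
Unshelve. all: end_near. Qed.
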